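(* For every integer $k\ge1$ large enough, with $h=1/k$, the zero solution of the difference equation with variable delay $$\zeta_h(n+1)=\zeta_h(n)-\Big\{h-\frac{\cos((n+1)h)-\cos(nh)}{3}\Big\}\,\zeta_h\Big(n-\Big\lfloor\frac{|\cos(nh)|}{h}\Big\rfloor\Big),\qquad n\ge0,$$ (with initial values $\zeta_h(n)$ prescribed for $n=-k,\dots,0$) is uniformly asymptotically stable. Moreover, its solutions with $\zeta_h(n)=\varphi(nh)$, $n=-k,\dots,0$, approximate the solution of $x'(t)=-\big[1+\tfrac{\sin t}{3}\big]x(t-|\cos t|)$, $x=\varphi$ on $[-1,0]$, in the sense that $|x(t)-\zeta_h(\lfloor t/h\rfloor)|\to0$ as $h\to0$ for each $t>0$.
   Context: Here $\varphi\in C([-1,0],\mathbb R)$. The coefficient satisfies $\int_{nh}^{(n+1)h}\big(1+\tfrac{\sin s}{3}\big)ds=h-\frac{\cos((n+1)h)-\cos(nh)}{3}$, so the equation is the piecewise-constant-argument discretization of $x'(t)=-a(t)x(t-r(t))$ with $a(t)=1+\frac{\sin t}{3}$, $r(t)=|\cos t|$, $q=1$. Uniform asymptotic stability of the zero solution of a delay difference equation means uniform stability together with uniform attractivity with respect to the initial time. *)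

From Stdlib Require Import Reals Lra Lia ZArith.
Open Scope R_scope.

Definition hstep (k : nat) : R := 1 / INR k.

(* floor on R: Int_part x = up x - 1 is the floor of x. *)
Definition floorZ (x : R) : Z := Int_part x.

Definition coef (k : nat) (n : Z) : R :=
  hstep k - (cos (IZR (n + 1) * hstep k) - cos (IZR n * hstep k)) / 3.

Definition delay (k : nat) (n : Z) : Z :=
  floorZ (Rabs (cos (IZR n * hstep k)) / hstep k).

Definition is_sol (k : nat) (n0 : Z) (zeta : Z -> R) : Prop :=
  forall n : Z, (n0 <= n)%Z ->
    zeta (n + 1)%Z = zeta n - coef k n * zeta (n - delay k n)%Z.

Definition init_small (k : nat) (n0 : Z) (zeta : Z -> R) (d : R) : Prop :=
  forall j : Z, (n0 - Z.of_nat k <= j <= n0)%Z -> Rabs (zeta j) < d.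

Definition unif_stable (k : nat) : Prop :=
  forall eps, 0 < eps -> exists delta, 0 < delta /\
    forall (n0 : Z) (zeta : Z -> R), (0 <= n0)%Z ->
      is_sol k n0 zeta -> init_small k n0 zeta delta ->
      forall n, (n0 <= n)%Z -> Rabs (zeta n) < eps.

Definition unif_attractive (k : nat) : Prop :=
  exists eta, 0 < eta /\
    forall eps, 0 < eps -> exists N : nat,
      forall (n0 : Z) (zeta : Z -> R), (0 <= n0)%Z ->
        is_sol k n0 zeta -> init_small k n0 zeta eta ->
        forall n, (n0 + Z.of_nat N <= n)%Z -> Rabs (zeta n) < eps.

Definition unif_asympt_stable (k : nat) : Prop :=
  unif_stable k /\ unif_attractive k.

Definition cont_on_m10 (phi : R -> R) : Prop :=
  forall t, -1 <= t <= 0 -> forall eps, 0 < eps -> exists delta, 0 < delta /\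
    forall s, -1 <= s <= 0 -> Rabs (s - t) < delta -> Rabs (phi s - phi t) < eps.

Definition is_dde_sol (phi x : R -> R) : Prop :=
  (forall t, -1 <= t <= 0 -> x t = phi t) /\
  (forall eps, 0 < eps -> exists delta, 0 < delta /\
     forall t, 0 <= t < delta -> Rabs (x t - x 0) < eps) /\
  (forall t, 0 < t ->
     derivable_pt_lim x t (- (1 + sin t / 3) * x (t - Rabs (cos t)))).

From Stdlib Require Import Reals Lra Lia ZArith.
From Coquelicot Require Import Coquelicot.
Open Scope R_scope.

(* Write the scheme as z(n+1) = z(n) - c_n z(n - d_n) with 0 <= c_n <= lam,
   0 <= d_n <= K and (K + 2) lam <= sigma <= 3/2, a discrete form of Yorke's 3/2-condition.
   If z(n+1) is large although the delayed value z(n - d_n) is negative, z changed sign at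
   some p after n - d_n; before p the solution is bounded below by -B times the coefficient
   mass back to p, and after p a comparison with the concave function [yorke_G] gives
   z(n+1) <= (sigma - 1/2) B.  Otherwise z does not increase at that step.  So a bound B
   propagates, and when every M consecutive coefficients carry mass >= 1 a positive
   solution cannot stay above B/2 for long: bounds contract by sigma - 1/2 every
   4K + M + 1 steps.  For h = 1/k one has c_n <= 4h/3 and d_n <= k, which gives
   sigma = 17/12 as soon as k >= 32.

   By the mean value theorem the exact solution satisfies the scheme up to
   a local error (4/3) h eps, where eps bounds the oscillation of x over 3h on [-1, t];
   a discrete Gronwall inequality with delays accumulates these errors to at most
   (e^(4t/3) - 1) eps. *)

(** * A discrete Yorke 3/2-condition *)

Lemma Z_upward_ind (P : Z -> Prop) (a : Z) :
  P a -> (forall n, (a <= n)%Z -> P n -> P (n + 1)%Z) -> forall n, (a <= n)%Z -> P n.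
Proof.
  intros H0 HS n Hn.
  replace n with (a + Z.of_nat (Z.to_nat (n - a)))%Z by lia.
  induction (Z.to_nat (n - a)) as [|t IH].
  - now rewrite Z.add_0_r.
  - replace (a + Z.of_nat (S t))%Z with (a + Z.of_nat t + 1)%Z by lia.
    apply HS; [lia | exact IH].
Qed.

Lemma Z_downward_ind (P : Z -> Prop) (b : Z) :
  P b -> (forall n, (n < b)%Z -> P (n + 1)%Z -> P n) -> forall n, (n <= b)%Z -> P n.
Proof.
  intros H0 HS n Hn.
  replace n with (b - Z.of_nat (Z.to_nat (b - n)))%Z by lia.
  induction (Z.to_nat (b - n)) as [|t IH].
  - now rewrite Z.sub_0_r.
  - apply HS; [lia|]. now replace (b - Z.of_nat (S t) + 1)%Z with (b - Z.of_nat t)%Z by lia.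
Qed.

Definition delay_sol (c : Z -> R) (d : Z -> Z) (n0 : Z) (z : Z -> R) : Prop :=
  forall n, (n0 <= n)%Z -> z (n + 1)%Z = z n - c n * z (n - d n)%Z.

Definition bounded_on (z : Z -> R) (a b : Z) (B : R) : Prop :=
  forall j, (a <= j <= b)%Z -> Rabs (z j) <= B.

Definition bounded_from (z : Z -> R) (a : Z) (B : R) : Prop :=
  forall j, (a <= j)%Z -> Rabs (z j) <= B.

Lemma delay_sol_opp c d n0 z : delay_sol c d n0 z -> delay_sol c d n0 (fun j => - z j).
Proof. intros Hs n Hn. rewrite (Hs n Hn). ring. Qed.

Lemma delay_sol_later c d n0 n1 z : (n0 <= n1)%Z -> delay_sol c d n0 z -> delay_sol c d n1 z.
Proof. intros H Hs n Hn. apply Hs. lia. Qed.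

Lemma bounded_on_opp z a b B : bounded_on z a b B -> bounded_on (fun j => - z j) a b B.
Proof. intros H j Hj. rewrite Rabs_Ropp. now apply H. Qed.

Lemma bounded_on_nonneg z a b B : bounded_on z a b B -> (a <= b)%Z -> 0 <= B.
Proof. intros H Hab. pose proof (H b ltac:(lia)). pose proof (Rabs_pos (z b)). lra. Qed.

Lemma last_nonpos_before (z : Z -> R) (a b : Z) : (a <= b)%Z -> z a <= 0 -> 0 < z b ->
  exists p, (a < p <= b)%Z /\ z (p - 1)%Z <= 0 /\ forall i, (p <= i <= b)%Z -> 0 < z i.
Proof.
  intros Hab Ha. revert b Hab. refine (Z_upward_ind _ a _ _); [lra|].
  intros b Hb IH Hb1.
  destruct (Rle_dec (z b) 0) as [Hle|Hlt].
  - exists (b + 1)%Z. split; [lia|]. split.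
    + now replace (b + 1 - 1)%Z with b by lia.
    + intros i Hi. now replace i with (b + 1)%Z by lia.
  - destruct (IH ltac:(lra)) as (p & Hp & Hp1 & Hpos).
    exists p. repeat split; try lia; [exact Hp1|].
    intros i Hi. destruct (Z.eq_dec i (b + 1)) as [->|Hne]; [exact Hb1|]. apply Hpos. lia.
Qed.

(* After a sign change at p, a solution bounded by B stays below B * yorke_G sigma u, where u
   is the coefficient mass accumulated since p; [yorke_G] peaks at sigma - 1/2. *)
Definition yorke_G (sigma u : R) : R := u - Rmax 0 (u - (sigma - 1)) ^ 2 / 2.

Lemma yorke_G_0 sigma : 1 <= sigma -> yorke_G sigma 0 = 0.
Proof. intros H. unfold yorke_G, Rmax. destruct Rle_dec; nra. Qed.

Lemma yorke_G_slope sigma a b : a <= b ->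
  yorke_G sigma a + (b - a) * Rmin 1 (sigma - b) <= yorke_G sigma b.
Proof.
  intros Hab. assert (0 <= (b - a) * (b - a)) by nra.
  unfold yorke_G, Rmax, Rmin. repeat destruct Rle_dec; nra.
Qed.

Lemma yorke_G_le sigma u : yorke_G sigma u <= sigma - 1 / 2.
Proof.
  unfold yorke_G, Rmax. pose proof (pow2_ge_0 (u - sigma)). destruct Rle_dec; nra.
Qed.

Section YorkeCondition.

Variables (K : nat) (lam sigma : R) (c : Z -> R) (d : Z -> Z) (cum : Z -> R).
Hypothesis c_incr : forall j, c j = cum (j + 1)%Z - cum j.
Hypothesis c_range : forall j, 0 <= c j <= lam.
Hypothesis d_range : forall j, (0 <= d j <= Z.of_nat K)%Z.
Hypothesis three_halves : (INR K + 2) * lam <= sigma.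
Hypothesis sigma_range : 1 <= sigma <= 3 / 2.

Lemma cum_increment a b : (a <= b)%Z -> 0 <= cum b - cum a <= lam * IZR (b - a).
Proof.
  revert b. refine (Z_upward_ind _ a _ _).
  - rewrite Z.sub_diag. lra.
  - intros b Hab IH. pose proof (c_incr b). pose proof (c_range b).
    replace (b + 1 - a)%Z with (b - a + 1)%Z by lia. rewrite plus_IZR. nra.
Qed.

Lemma sol_ge_before_nonneg n0 z B p : delay_sol c d n0 z ->
  bounded_on z (n0 - Z.of_nat K) (p - 1) B -> 0 <= z p ->
  forall i, (i <= p)%Z -> (n0 <= i)%Z -> - B * (cum p - cum i) <= z i.
Proof.
  intros Hs Hb Hp. refine (Z_downward_ind _ p _ _).
  - intros _. rewrite Rminus_diag. lra.
  - intros i Hi IH Hi0. specialize (IH ltac:(lia)).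
    pose proof (Hs i Hi0). pose proof (c_incr i). pose proof (c_range i). pose proof (d_range i).
    pose proof (proj1 (Rabs_le_between _ _) (Hb (i - d i)%Z ltac:(lia))). nra.
Qed.

Section AfterSignChange.

Variables (n0 : Z) (z : Z -> R) (B : R) (n p : Z).
Hypothesis z_sol : delay_sol c d n0 z.
Hypothesis n_late : (n0 + 2 * Z.of_nat K <= n)%Z.
Hypothesis z_bounded : bounded_on z (n0 - Z.of_nat K) n B.
Hypothesis p_range : (n - d n < p <= n + 1)%Z.
Hypothesis z_pos_after : forall i, (p <= i <= n + 1)%Z -> 0 < z i.

Lemma delayed_term_bound j : (p - 1 <= j <= n)%Z ->
  - z (j - d j)%Z <= B * Rmin 1 (sigma - (cum (j + 1)%Z - cum (p - 1)%Z)).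
Proof.
  intros Hj. pose proof (bounded_on_nonneg _ _ _ _ z_bounded ltac:(lia)) as HB.
  pose proof (d_range n). pose proof (d_range j). pose proof (c_range (p - 1)%Z).
  pose proof (c_incr (p - 1)%Z). replace (p - 1 + 1)%Z with p in * by lia.
  assert (HK : IZR (Z.of_nat K) = INR K) by now rewrite <- INR_IZR_INZ.
  set (i := (j - d j)%Z).
  destruct (cum_increment (p - 1) (j + 1) ltac:(lia)) as [_ HT].
  assert (IZR (j + 1 - (p - 1)) <= INR K + 1) by (rewrite <- HK, <- plus_IZR; apply IZR_le; lia).
  pose proof (pos_INR K).
  assert (HTs : cum (j + 1)%Z - cum (p - 1)%Z <= sigma) by nra.
  destruct (Z_le_gt_dec p i) as [Hpi|Hpi].
  - pose proof (z_pos_after i ltac:(unfold i; lia)).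
    unfold Rmin. destruct Rle_dec; nra.
  - pose proof (sol_ge_before_nonneg n0 z B p z_sol
      ltac:(intros l Hl; apply z_bounded; lia) ltac:(left; apply z_pos_after; lia)
      i ltac:(lia) ltac:(unfold i; lia)).
    pose proof (proj1 (Rabs_le_between _ _) (z_bounded i ltac:(unfold i; lia))).
    destruct (cum_increment i (j + 1) ltac:(lia)) as [_ Hij].
    assert (IZR (j + 1 - i) <= INR K + 1) by (rewrite <- HK, <- plus_IZR; apply IZR_le; lia).
    assert (cum p - cum i <= sigma - (cum (j + 1)%Z - cum (p - 1)%Z)) by nra.
    unfold Rmin. destruct Rle_dec; nra.
Qed.

Lemma sol_le_yorke_G : z (p - 1)%Z <= 0 ->
  forall j, (p - 2 <= j)%Z -> (j <= n)%Z ->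
  z (j + 1)%Z <= B * yorke_G sigma (cum (j + 1)%Z - cum (p - 1)%Z).
Proof.
  intros Hp1. pose proof (bounded_on_nonneg _ _ _ _ z_bounded ltac:(lia)) as HB.
  pose proof (d_range n).
  refine (Z_upward_ind _ (p - 2) _ _).
  - intros _. replace (p - 2 + 1)%Z with (p - 1)%Z by lia.
    rewrite Rminus_diag, yorke_G_0 by lra. lra.
  - intros j Hj IH Hjn. specialize (IH ltac:(lia)).
    rewrite (z_sol (j + 1)%Z ltac:(lia)).
    pose proof (delayed_term_bound (j + 1)%Z ltac:(lia)) as Hdel.
    pose proof (c_incr (j + 1)%Z). pose proof (c_range (j + 1)%Z).
    set (T := cum (j + 1)%Z - cum (p - 1)%Z) in *.
    replace (cum (j + 1 + 1)%Z - cum (p - 1)%Z) with (T + c (j + 1)%Z) in * by (unfold T; lra).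
    pose proof (yorke_G_slope sigma T (T + c (j + 1)%Z) ltac:(lra)) as Hslope.
    replace (T + c (j + 1)%Z - T) with (c (j + 1)%Z) in Hslope by ring.
    nra.
Qed.

End AfterSignChange.

Lemma sol_step_alternative n0 z B n : delay_sol c d n0 z ->
  (n0 + 2 * Z.of_nat K <= n)%Z -> bounded_on z (n0 - Z.of_nat K) n B ->
  z (n + 1)%Z <= (sigma - 1 / 2) * B \/ (0 <= z (n - d n)%Z /\ z (n + 1)%Z <= z n).
Proof.
  intros Hs Hn Hb. pose proof (bounded_on_nonneg _ _ _ _ Hb ltac:(lia)) as HB.
  destruct (Rle_dec (z (n + 1)%Z) ((sigma - 1 / 2) * B)) as [Hle|Hgt]; [now left|].
  pose proof (d_range n). pose proof (c_range n). pose proof (Hs n ltac:(lia)).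
  destruct (Rle_dec 0 (z (n - d n)%Z)) as [Hm|Hm]; [right; split; nra|].
  destruct (last_nonpos_before z (n - d n) (n + 1) ltac:(lia) ltac:(lra) ltac:(nra))
    as (p & Hp & Hp1 & Hpos).
  pose proof (sol_le_yorke_G n0 z B n p Hs Hn Hb ltac:(lia) Hpos Hp1 n ltac:(lia) ltac:(lia)).
  pose proof (yorke_G_le sigma (cum (n + 1)%Z - cum (p - 1)%Z)). left. nra.
Qed.

Lemma sol_bounded_forever n0 z B : delay_sol c d n0 z ->
  bounded_on z (n0 - Z.of_nat K) (n0 + 2 * Z.of_nat K) B -> bounded_from z (n0 - Z.of_nat K) B.
Proof.
  intros Hs Hb.
  assert (H : forall n, (n0 + 2 * Z.of_nat K <= n)%Z -> bounded_on z (n0 - Z.of_nat K) n B).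
  { refine (Z_upward_ind _ _ Hb _). intros n Hn IH j Hj.
    destruct (Z.eq_dec j (n + 1)) as [->|Hne]; [|apply IH; lia].
    pose proof (bounded_on_nonneg _ _ _ _ IH ltac:(lia)).
    pose proof (proj1 (Rabs_le_between _ _) (IH n ltac:(lia))).
    destruct (sol_step_alternative n0 z B n Hs Hn IH) as [Hup|[_ Hup]];
    destruct (sol_step_alternative n0 _ B n (delay_sol_opp _ _ _ _ Hs) Hn
      (bounded_on_opp _ _ _ _ IH)) as [Hlow|[_ Hlow]];
    apply Rabs_le; cbv beta in *; nra. }
  intros j Hj. apply (H (Z.max j (n0 + 2 * Z.of_nat K))); lia.
Qed.

Lemma sol_growth n0 z delta : delay_sol c d n0 z -> bounded_on z (n0 - Z.of_nat K) n0 delta ->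
  forall t : nat, bounded_on z (n0 - Z.of_nat K) (n0 + Z.of_nat t) ((1 + lam) ^ t * delta).
Proof.
  intros Hs Hb. pose proof (bounded_on_nonneg _ _ _ _ Hb ltac:(lia)) as Hd.
  assert (Hlam : 0 <= lam) by (pose proof (c_range 0); lra).
  induction t as [|t IH]; intros j Hj.
  - rewrite pow_O, Rmult_1_l. apply Hb. lia.
  - assert (1 <= (1 + lam) ^ t) by (apply pow_R1_Rle; lra).
    assert (0 <= lam * ((1 + lam) ^ t * delta)) by (apply Rmult_le_pos; nra).
    simpl pow. rewrite Rmult_assoc.
    destruct (Z.eq_dec j (n0 + Z.of_nat (S t))) as [->|Hne]; [|pose proof (IH j ltac:(lia)); lra].
    set (n := (n0 + Z.of_nat t)%Z). replace (n0 + Z.of_nat (S t))%Z with (n + 1)%Z by lia.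
    rewrite (Hs n ltac:(lia)). pose proof (c_range n). pose proof (d_range n).
    pose proof (IH n ltac:(lia)). pose proof (IH (n - d n)%Z ltac:(lia)).
    pose proof (Rabs_triang (z n) (- (c n * z (n - d n)%Z))).
    rewrite Rabs_Ropp, Rabs_mult, (Rabs_pos_eq (c n)) in * by lra.
    assert (c n * Rabs (z (n - d n)%Z) <= lam * ((1 + lam) ^ t * delta))
      by (apply Rmult_le_compat; try lra; apply Rabs_pos).
    unfold Rminus. lra.
Qed.

Lemma sol_bounded n0 z delta : delay_sol c d n0 z -> bounded_on z (n0 - Z.of_nat K) n0 delta ->
  bounded_from z (n0 - Z.of_nat K) ((1 + lam) ^ (2 * K) * delta).
Proof.
  intros Hs Hb. apply (sol_bounded_forever n0 z _ Hs).
  intros j Hj. apply (sol_growth n0 z delta Hs Hb (2 * K)). lia.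
Qed.

Variable M : nat.
Hypothesis cum_spread : forall a, 1 <= cum (a + Z.of_nat M)%Z - cum a.

Lemma sol_contracts n0 z B : delay_sol c d n0 z -> bounded_from z (n0 - Z.of_nat K) B ->
  forall n, (n0 + 3 * Z.of_nat K + Z.of_nat M <= n)%Z -> z n <= (sigma - 1 / 2) * B.
Proof.
  intros Hs Hb n Hn. pose proof (Rabs_pos (z n0)). pose proof (Hb n0 ltac:(lia)).
  destruct (Rle_dec (z n) ((sigma - 1 / 2) * B)) as [Hle|Hgt]; [exact Hle|].
  set (A := (n0 + 2 * Z.of_nat K)%Z).
  assert (Hmin : forall j, (j <= n)%Z -> (A <= j)%Z -> z n <= z j).
  { refine (Z_downward_ind _ n _ _); [intros; lra|]. intros j Hj IH HAj.
    specialize (IH ltac:(lia)).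
    destruct (sol_step_alternative n0 z B j Hs ltac:(lia) ltac:(intros l Hl; apply Hb; lia))
      as [H1|[_ H1]]; lra. }
  assert (Hdescent : forall j, (A + Z.of_nat K <= j)%Z -> (j <= n)%Z ->
            z j <= B - (cum j - cum (A + Z.of_nat K)%Z) * z n).
  { refine (Z_upward_ind _ _ _ _).
    - intros _. rewrite Rminus_diag.
      pose proof (proj1 (Rabs_le_between _ _) (Hb (A + Z.of_nat K)%Z ltac:(lia))). lra.
    - intros j Hj IH Hjn. specialize (IH ltac:(lia)).
      rewrite (Hs j ltac:(lia)).
      pose proof (c_incr j). pose proof (c_range j). pose proof (d_range j).
      pose proof (Hmin (j - d j)%Z ltac:(lia) ltac:(lia)). nra. }
  pose proof (Hdescent n ltac:(lia) ltac:(lia)).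
  pose proof (cum_spread (A + Z.of_nat K)%Z).
  destruct (cum_increment (A + Z.of_nat K + Z.of_nat M) n ltac:(lia)) as [Hm _].
  assert (0 < z n) by nra.
  assert (z n <= B - z n) by nra.
  nra.
Qed.

Lemma sol_contracts_abs n0 z B : delay_sol c d n0 z -> bounded_from z (n0 - Z.of_nat K) B ->
  bounded_from z (n0 + 3 * Z.of_nat K + Z.of_nat M) ((sigma - 1 / 2) * B).
Proof.
  intros Hs Hb j Hj. apply Rabs_le.
  pose proof (sol_contracts n0 z B Hs Hb j Hj).
  pose proof (sol_contracts n0 _ B (delay_sol_opp _ _ _ _ Hs)
    ltac:(intros l Hl; cbv beta; rewrite Rabs_Ropp; now apply Hb) j Hj).
  cbv beta in *. lra.
Qed.

Lemma sol_decay n0 z B : delay_sol c d n0 z -> bounded_from z (n0 - Z.of_nat K) B ->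
  forall m : nat,
  bounded_from z (n0 + Z.of_nat m * (4 * Z.of_nat K + Z.of_nat M + 1) - Z.of_nat K)
    ((sigma - 1 / 2) ^ m * B).
Proof.
  intros Hs Hb m. induction m as [|m IH]; intros j Hj.
  - rewrite pow_O, Rmult_1_l. apply Hb. lia.
  - set (n1 := (n0 + Z.of_nat m * (4 * Z.of_nat K + Z.of_nat M + 1))%Z) in IH.
    simpl pow. rewrite Rmult_assoc.
    apply (sol_contracts_abs n1 z _ (delay_sol_later _ _ n0 n1 z ltac:(nia) Hs) IH).
    unfold n1. nia.
Qed.

End YorkeCondition.

(** * The scheme for h = 1/k *)

Lemma hstep_spec k : (1 <= k)%nat -> 0 < hstep k /\ INR k * hstep k = 1.
Proof.
  intros Hk. assert (1 <= INR k) by (apply (le_INR 1); lia).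
  unfold hstep. split; [apply Rdiv_lt_0_compat; lra | field; lra].
Qed.

Lemma cos_lipschitz p q : Rabs (cos p - cos q) <= Rabs (p - q).
Proof.
  assert (Hlt : forall a b, a < b -> Rabs (cos b - cos a) <= Rabs (b - a)).
  { intros a b Hab.
    destruct (MVT_cor2 cos (fun u => - sin u) a b Hab (fun u _ => derivable_pt_lim_cos u))
      as (u & Hu & _).
    rewrite Hu, Rabs_mult, Rabs_Ropp.
    pose proof (Rabs_pos (b - a)). pose proof (SIN_bound u).
    assert (Rabs (sin u) <= 1) by (apply Rabs_le; lra). nra. }
  destruct (Rtotal_order p q) as [H|[->|H]].
  - rewrite (Rabs_minus_sym (cos p)), (Rabs_minus_sym p). now apply Hlt.
  - rewrite !Rminus_diag. lra.
  - now apply Hlt.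
Qed.

(* [coef k n] is the integral of 1 + sin/3 over [nh, (n+1)h]; this is its primitive. *)
Definition coef_primitive (k : nat) (j : Z) : R := IZR j * hstep k - cos (IZR j * hstep k) / 3.

Lemma coef_primitive_diff k j : coef k j = coef_primitive k (j + 1) - coef_primitive k j.
Proof. unfold coef, coef_primitive. rewrite plus_IZR. lra. Qed.

Lemma coef_primitive_increment k a b : (1 <= k)%nat -> (a <= b)%Z ->
  2 / 3 * IZR (b - a) * hstep k <= coef_primitive k b - coef_primitive k a
  <= 4 / 3 * IZR (b - a) * hstep k.
Proof.
  intros Hk Hab. destruct (hstep_spec k Hk) as [Hh _].
  assert (0 <= IZR (b - a)) by (apply IZR_le; lia).
  pose proof (cos_lipschitz (IZR b * hstep k) (IZR a * hstep k)) as Hl.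
  rewrite <- Rmult_minus_distr_r, <- minus_IZR, Rabs_mult,
    (Rabs_pos_eq (IZR (b - a))), (Rabs_pos_eq (hstep k)) in Hl by lra.
  apply Rabs_le_between in Hl. unfold coef_primitive. rewrite minus_IZR in *. nra.
Qed.

Lemma coef_range k j : (1 <= k)%nat -> 0 <= coef k j <= 4 / 3 * hstep k.
Proof.
  intros Hk. destruct (hstep_spec k Hk) as [Hh _].
  pose proof (coef_primitive_increment k j (j + 1) Hk ltac:(lia)).
  rewrite coef_primitive_diff. replace (j + 1 - j)%Z with 1%Z in * by lia. lra.
Qed.

Lemma delay_spec k j : (1 <= k)%nat ->
  (0 <= delay k j <= Z.of_nat k)%Z /\
  IZR (delay k j) * hstep k <= Rabs (cos (IZR j * hstep k)) < (IZR (delay k j) + 1) * hstep k.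
Proof.
  intros Hk. destruct (hstep_spec k Hk) as [Hh Hkh].
  unfold delay, floorZ.
  set (a := Rabs (cos (IZR j * hstep k))).
  assert (Ha : 0 <= a <= 1).
  { pose proof (COS_bound (IZR j * hstep k)). split; [apply Rabs_pos | apply Rabs_le; lra]. }
  assert (Hr : a / hstep k * hstep k = a) by (field; lra).
  assert (0 <= a / hstep k <= INR k) by (split; nra).
  pose proof (base_Int_part (a / hstep k)) as [B1 B2].
  split; [split|split].
  - assert (-1 < Int_part (a / hstep k))%Z by (apply lt_IZR; lra). lia.
  - apply le_IZR. rewrite <- INR_IZR_INZ. lra.
  - rewrite <- Hr at 2. apply Rmult_le_compat_r; lra.
  - rewrite <- Hr at 1. apply Rmult_lt_compat_r; lra.
Qed.

Lemma scheme_three_halves k : (32 <= k)%nat -> (INR k + 2) * (4 / 3 * hstep k) <= 17 / 12.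
Proof.
  intros Hk. destruct (hstep_spec k ltac:(lia)) as [Hh Hkh].
  assert (32 <= INR k) by (rewrite INR_IZR_INZ; apply IZR_le; lia). nra.
Qed.

Lemma coef_primitive_spread k a : (1 <= k)%nat ->
  1 <= coef_primitive k (a + Z.of_nat (2 * k)) - coef_primitive k a.
Proof.
  intros Hk. destruct (hstep_spec k Hk) as [Hh Hkh].
  pose proof (coef_primitive_increment k a (a + Z.of_nat (2 * k)) Hk ltac:(lia)).
  replace (a + Z.of_nat (2 * k) - a)%Z with (Z.of_nat (2 * k)) in * by lia.
  rewrite <- INR_IZR_INZ, mult_INR in *. simpl INR in *. nra.
Qed.

Lemma scheme_bounded k n0 z delta : (32 <= k)%nat -> is_sol k n0 z ->
  bounded_on z (n0 - Z.of_nat k) n0 delta ->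
  bounded_from z (n0 - Z.of_nat k) ((1 + 4 / 3 * hstep k) ^ (2 * k) * delta).
Proof.
  intros Hk. apply (sol_bounded k _ (17 / 12) _ _ _ (coef_primitive_diff k)
    (fun j => coef_range k j ltac:(lia)) (fun j => proj1 (delay_spec k j ltac:(lia)))
    (scheme_three_halves k Hk)). lra.
Qed.

Lemma scheme_decay k n0 z B : (32 <= k)%nat -> is_sol k n0 z ->
  bounded_from z (n0 - Z.of_nat k) B ->
  forall m : nat, bounded_from z (n0 + Z.of_nat (m * (6 * k + 1)) - Z.of_nat k) ((11 / 12) ^ m * B).
Proof.
  intros Hk Hs Hb m j Hj.
  replace (11 / 12) with (17 / 12 - 1 / 2) by lra.
  apply (sol_decay k _ (17 / 12) _ _ _ (coef_primitive_diff k)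
    (fun j => coef_range k j ltac:(lia)) (fun j => proj1 (delay_spec k j ltac:(lia)))
    (scheme_three_halves k Hk) ltac:(lra) (2 * k) (fun a => coef_primitive_spread k a ltac:(lia))
    n0 z B Hs Hb m j). lia.
Qed.

Lemma init_small_bounded k n0 z delta :
  init_small k n0 z delta -> bounded_on z (n0 - Z.of_nat k) n0 delta.
Proof. intros H j Hj. left. now apply H. Qed.

Theorem unif_stable_of_ge_32 k : (32 <= k)%nat -> unif_stable k.
Proof.
  intros Hk eps Heps. set (G := (1 + 4 / 3 * hstep k) ^ (2 * k)).
  assert (1 <= G) by (apply pow_R1_Rle; pose proof (hstep_spec k ltac:(lia)); lra).
  exists (eps / (2 * G)). split; [apply Rdiv_lt_0_compat; lra|].
  intros n0 z _ Hs Hi n Hn.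
  pose proof (scheme_bounded k n0 z _ Hk Hs (init_small_bounded _ _ _ _ Hi) n ltac:(lia)) as Hz.
  fold G in Hz. replace (G * (eps / (2 * G))) with (eps / 2) in Hz by (field; lra). lra.
Qed.

Theorem unif_attractive_of_ge_32 k : (32 <= k)%nat -> unif_attractive k.
Proof.
  intros Hk. set (G := (1 + 4 / 3 * hstep k) ^ (2 * k)).
  assert (1 <= G) by (apply pow_R1_Rle; pose proof (hstep_spec k ltac:(lia)); lra).
  exists 1. split; [lra|]. intros eps Heps.
  destruct (pow_lt_1_zero (11 / 12) ltac:(rewrite Rabs_pos_eq; lra) (eps / G)
    ltac:(apply Rdiv_lt_0_compat; lra)) as [m Hm].
  exists (m * (6 * k + 1))%nat. intros n0 z _ Hs Hi n Hn.
  pose proof (scheme_decay k n0 z _ Hk Hs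
    (scheme_bounded k n0 z _ Hk Hs (init_small_bounded _ _ _ _ Hi)) m n ltac:(lia)) as Hz.
  specialize (Hm m (le_n m)). rewrite Rabs_pos_eq in Hm by (apply pow_le; lra).
  apply (Rmult_lt_compat_r G) in Hm; [|lra].
  fold G in Hz. replace (eps / G * G) with eps in Hm by (field; lra). lra.
Qed.

(** * Convergence of the scheme *)

Lemma continuity_pt_eps_delta f s : continuity_pt f s <->
  forall e, 0 < e -> exists dl, 0 < dl /\ forall u, Rabs (u - s) < dl -> Rabs (f u - f s) < e.
Proof.
  unfold continuity_pt, continue_in, limit1_in, limit_in, dist; simpl; unfold R_dist.
  split; intros H e He; destruct (H e He) as (dl & Hdl & Hu); exists dl; split; auto.
  - intros u Hus. destruct (Req_dec u s) as [->|Hne].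
    + rewrite Rminus_diag, Rabs_R0. exact He.
    + apply Hu. repeat split; auto.
  - intros u [_ Hus]. now apply Hu.
Qed.

Lemma Rmax_lipschitz a u v : Rabs (Rmax a u - Rmax a v) <= Rabs (u - v).
Proof. unfold Rmax. repeat destruct Rle_dec; unfold Rabs; repeat destruct Rcase_abs; lra. Qed.

Lemma pow_le_exp q n : 0 <= q -> (1 + q) ^ n <= exp (INR n * q).
Proof.
  intros Hq. induction n as [|n IH].
  - rewrite pow_O, Rmult_0_l, exp_0. lra.
  - rewrite S_INR. replace ((INR n + 1) * q) with (q + INR n * q) by ring.
    rewrite exp_plus. simpl pow.
    apply Rmult_le_compat; [lra | apply pow_le; lra | apply exp_ineq1_le | exact IH].
Qed.

Lemma delay_gronwall (e : Z -> R) (r : Z -> Z) (L : Z) (q eps : R) (N : nat) :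
  0 <= q -> 0 <= eps ->
  (forall j, (L <= j <= 0)%Z -> e j <= 0) ->
  (forall m, (0 <= m < Z.of_nat N)%Z ->
     (L <= r m <= m)%Z /\ e (m + 1)%Z <= e m + q * e (r m) + q * eps) ->
  forall j, (L <= j <= Z.of_nat N)%Z -> e j <= ((1 + q) ^ N - 1) * eps.
Proof.
  intros Hq Heps H0. induction N as [|N IH]; intros Hstep j Hj.
  - rewrite pow_O. replace ((1 - 1) * eps) with 0 by ring. apply H0. lia.
  - specialize (IH (fun m Hm => Hstep m ltac:(lia))).
    assert (1 <= (1 + q) ^ N) by (apply pow_R1_Rle; lra).
    assert (Hb : ((1 + q) ^ N - 1) * eps <= ((1 + q) ^ S N - 1) * eps).
    { apply Rmult_le_compat_r; [lra|]. simpl pow. nra. }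
    destruct (Z.eq_dec j (Z.of_nat (S N))) as [->|Hne]; [|specialize (IH j ltac:(lia)); lra].
    destruct (Hstep (Z.of_nat N) ltac:(lia)) as [Hr He].
    replace (Z.of_nat (S N)) with (Z.of_nat N + 1)%Z by lia.
    pose proof (IH (Z.of_nat N) ltac:(lia)). pose proof (IH (r (Z.of_nat N)) ltac:(lia)).
    assert (q * e (r (Z.of_nat N)) <= q * (((1 + q) ^ N - 1) * eps))
      by (apply Rmult_le_compat_l; lra).
    simpl pow. nra.
Qed.

Section Discretization.

Variables (phi x : R -> R).
Hypothesis phi_cont : cont_on_m10 phi.
Hypothesis x_sol : is_dde_sol phi x.

Lemma dde_sol_continuous_within s : -1 <= s -> forall e, 0 < e -> exists dl, 0 < dl /\
  forall u, -1 <= u -> Rabs (u - s) < dl -> Rabs (x u - x s) < e.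
Proof.
  intros Hs e He. destruct x_sol as (Hinit & Hright & Hderiv).
  destruct (Rle_dec s 0) as [Hs0|Hs0].
  - destruct (phi_cont s ltac:(lra) (e / 2) ltac:(lra)) as (d1 & Hd1 & Hphi).
    destruct (Hright (e / 2) ltac:(lra)) as (d2 & Hd2 & Hx0).
    exists (Rmin d1 d2). split; [now apply Rmin_pos|].
    intros u Hu Hus. pose proof (Rmin_l d1 d2). pose proof (Rmin_r d1 d2).
    rewrite (Hinit s ltac:(lra)).
    destruct (Rle_dec u 0) as [Hu0|Hu0].
    + rewrite (Hinit u ltac:(lra)).
      assert (Rabs (phi u - phi s) < e / 2) by (apply Hphi; [split | ]; lra). lra.
    + rewrite Rabs_pos_eq in Hus by lra.
      pose proof (Hx0 u ltac:(lra)).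
      pose proof (Hphi 0 ltac:(lra) ltac:(rewrite Rabs_pos_eq; lra)).
      rewrite <- (Hinit 0 ltac:(lra)) in *.
      pose proof (Rabs_triang (x u - x 0) (x 0 - phi s)).
      replace (x u - x 0 + (x 0 - phi s)) with (x u - phi s) in * by ring. lra.
  - assert (Hc : continuity_pt x s)
      by (apply derivable_continuous_pt; exact (exist _ _ (Hderiv s ltac:(lra)))).
    destruct (proj1 (continuity_pt_eps_delta x s) Hc e He) as (dl & Hdl & Hu).
    exists dl. split; [exact Hdl|]. intros u _. apply Hu.
Qed.

Lemma dde_sol_continuity_pt s : 0 <= s -> continuity_pt x s.
Proof.
  intros Hs. apply continuity_pt_eps_delta. intros e He.
  destruct (dde_sol_continuous_within s ltac:(lra) e He) as (dl & Hdl & Hu).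
  exists (Rmin dl 1). split; [apply Rmin_pos; lra|].
  intros u Hus. pose proof (Rmin_l dl 1). pose proof (Rmin_r dl 1).
  apply Rabs_def2 in Hus as Hus'. apply Hu; lra.
Qed.

Lemma dde_sol_unif_cont T e : 0 < e -> exists dl, 0 < dl /\
  forall u v, -1 <= u <= T -> -1 <= v <= T -> Rabs (u - v) < dl -> Rabs (x u - x v) < e.
Proof.
  intros He.
  set (y := fun u => x (Rmax (-1) u)).
  assert (Hy : forall s, continuity_pt y s).
  { intros s. apply continuity_pt_eps_delta. intros e' He'.
    destruct (dde_sol_continuous_within (Rmax (-1) s) (Rmax_l _ _) e' He') as (dl & Hdl & Hu).
    exists dl. split; [exact Hdl|]. intros u Hus. apply Hu; [apply Rmax_l|].
    pose proof (Rmax_lipschitz (-1) u s). lra. }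
  destruct (Heine y _ (compact_P3 (-1) T) (fun s _ => Hy s) (mkposreal e He)) as ([dl Hdl] & Hu).
  exists dl. split; [exact Hdl|]. intros u v Hu' Hv' Huv.
  specialize (Hu u v Hu' Hv' Huv). unfold y in Hu. simpl in Hu.
  now rewrite !Rmax_right in Hu by lra.
Qed.

Variables (T e dl : R) (k : nat).
Hypothesis k_pos : (1 <= k)%nat.
Hypothesis x_unif_cont : forall u v, -1 <= u <= T -> -1 <= v <= T -> Rabs (u - v) < dl ->
  Rabs (x u - x v) < e.
Hypothesis h_small : 3 * hstep k < dl.

(* Mean value theorem for x(s) + (s - cos s / 3) v, whose derivative is
   (1 + sin s / 3) (v - x (s - |cos s|)); the scheme freezes the delayed value at
   v = x((n - d)h), which lies within 3h of every s - |cos s| on the step. *)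
Lemma local_error n : (0 <= n)%Z -> IZR (n + 1) * hstep k <= T ->
  Rabs (x (IZR (n + 1) * hstep k) - x (IZR n * hstep k)
        + coef k n * x (IZR (n - delay k n) * hstep k)) <= 4 / 3 * hstep k * e.
Proof.
  intros Hn Hb. destruct (hstep_spec k k_pos) as [Hh Hkh].
  destruct x_sol as (_ & _ & Hderiv).
  pose proof (delay_spec k n k_pos) as ([Hd0 HdK] & Hd1 & Hd2).
  set (h := hstep k) in *. set (d := delay k n) in *.
  set (a := IZR n * h) in *. set (b := IZR (n + 1) * h) in *.
  assert (Hba : b = a + h) by (unfold a, b; rewrite plus_IZR; ring).
  assert (Ha0 : 0 <= a) by (unfold a; apply Rmult_le_pos; [apply IZR_le|]; lia || lra).
  set (v := x (IZR (n - d) * h)).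
  destruct (MVT_gen (fun s => x s + (s - cos s / 3) * v) a b
    (fun s => - (1 + sin s / 3) * x (s - Rabs (cos s)) + (1 + sin s / 3) * v)) as (s & Hs & Hmvt).
  - intros s Hs. rewrite Rmin_left, Rmax_right in Hs by lra.
    apply (is_derive_plus x (fun u => (u - cos u / 3) * v)).
    + apply is_derive_Reals, Hderiv. lra.
    + auto_derive; [easy|]. field.
  - intros s Hs. rewrite Rmin_left, Rmax_right in Hs by lra.
    apply continuity_pt_plus; [apply dde_sol_continuity_pt; lra|].
    apply derivable_continuous_pt. apply ex_derive_Reals_0. auto_derive. easy.
  - rewrite Rmin_left, Rmax_right in Hs by lra.
    replace (x b - x a + coef k n * v) with ((1 + sin s / 3) * (v - x (s - Rabs (cos s))) * h).
    2:{ rewrite coef_primitive_diff. unfold coef_primitive. fold h. fold a b.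
        replace (b - a) with h in Hmvt by lra. lra. }
    pose proof (cos_lipschitz s a) as Hlip. rewrite (Rabs_pos_eq (s - a)) in Hlip by lra.
    pose proof (Rabs_triang_inv (cos s) (cos a)).
    pose proof (Rabs_triang_inv (cos a) (cos s)) as Htri. rewrite (Rabs_minus_sym (cos a)) in Htri.
    assert (IZR d <= INR k) by (rewrite INR_IZR_INZ; apply IZR_le; lia).
    assert (IZR d * h <= 1) by nra.
    assert (0 <= IZR d) by (apply IZR_le; lia).
    pose proof (COS_bound s). assert (Rabs (cos s) <= 1) by (apply Rabs_le; lra).
    assert (Hv : Rabs (v - x (s - Rabs (cos s))) < e).
    { unfold v.
      assert (Hnd : IZR (n - d) * h = a - IZR d * h) by (unfold a; rewrite minus_IZR; ring).
      rewrite Hnd. pose proof (Rabs_pos (cos s)). apply x_unif_cont; [nra | nra |].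
      apply Rabs_def1; lra. }
    assert (Rabs (1 + sin s / 3) <= 4 / 3) by (pose proof (SIN_bound s); apply Rabs_le; lra).
    rewrite !Rabs_mult, (Rabs_pos_eq h) by lra.
    assert (Rabs (1 + sin s / 3) * Rabs (v - x (s - Rabs (cos s))) <= 4 / 3 * e)
      by (apply Rmult_le_compat; try apply Rabs_pos; lra).
    nra.
Qed.

Lemma discretization_error z : is_sol k 0 z ->
  (forall j, (- Z.of_nat k <= j <= 0)%Z -> z j = phi (IZR j * hstep k)) ->
  forall N : nat, INR N * hstep k <= T ->
  forall j, (- Z.of_nat k <= j <= Z.of_nat N)%Z ->
  Rabs (x (IZR j * hstep k) - z j) <= ((1 + 4 / 3 * hstep k) ^ N - 1) * e.
Proof.
  intros Hs Hinit N HN. destruct (hstep_spec k k_pos) as [Hh Hkh].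
  assert (0 <= T) by (pose proof (pos_INR N); nra).
  pose proof (x_unif_cont 0 0 ltac:(lra) ltac:(lra) ltac:(rewrite Rminus_diag, Rabs_R0; lra)) as He.
  rewrite Rminus_diag, Rabs_R0 in He.
  apply (delay_gronwall (fun j => Rabs (x (IZR j * hstep k) - z j)) (fun m => (m - delay k m)%Z));
    [lra | lra | |].
  - intros j Hj. destruct x_sol as (Hx & _).
    assert (- INR k <= IZR j) by (rewrite INR_IZR_INZ, <- opp_IZR; apply IZR_le; lia).
    assert (IZR j <= 0) by (apply IZR_le; lia).
    rewrite Hinit, Hx by (lia || nra). rewrite Rminus_diag, Rabs_R0. lra.
  - intros m Hm. pose proof (delay_spec k m k_pos) as ([Hd0 HdK] & _). split; [lia|].
    assert (IZR (m + 1) * hstep k <= T).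
    { assert (IZR (m + 1) <= INR N) by (rewrite INR_IZR_INZ; apply IZR_le; lia). nra. }
    pose proof (local_error m ltac:(lia) ltac:(assumption)) as Hloc.
    pose proof (coef_range k m k_pos) as Hc. rewrite (Hs m ltac:(lia)).
    set (E1 := x (IZR m * hstep k) - z m).
    set (E2 := x (IZR (m - delay k m) * hstep k) - z (m - delay k m)%Z).
    set (L := x (IZR (m + 1) * hstep k) - x (IZR m * hstep k)
              + coef k m * x (IZR (m - delay k m) * hstep k)) in Hloc.
    replace (x (IZR (m + 1) * hstep k) - (z m - coef k m * z (m - delay k m)%Z))
      with (L + E1 + - (coef k m * E2)) by (unfold L, E1, E2; ring).
    pose proof (Rabs_triang (L + E1) (- (coef k m * E2))).
    pose proof (Rabs_triang L E1).
    rewrite Rabs_Ropp, Rabs_mult, (Rabs_pos_eq (coef k m)) in * by lra.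
    assert (coef k m * Rabs E2 <= 4 / 3 * hstep k * Rabs E2)
      by (apply Rmult_le_compat_r; [apply Rabs_pos | lra]).
    lra.
Qed.

End Discretization.

Lemma hstep_eventually_lt dl : 0 < dl ->
  exists K : nat, forall k, (1 <= k)%nat -> (K <= k)%nat -> 3 * hstep k < dl.
Proof.
  intros Hdl. destruct (archimed (3 / dl)) as [Hup _].
  exists (Z.to_nat (up (3 / dl))). intros k Hk1 HkK.
  destruct (hstep_spec k Hk1) as [Hh Hkh].
  assert (H3 : 3 / dl < INR k).
  { apply (Rlt_le_trans _ _ _ Hup). rewrite INR_IZR_INZ. apply IZR_le. lia. }
  apply (Rmult_lt_compat_r dl) in H3; [|lra].
  unfold Rdiv in H3. rewrite Rmult_assoc, Rinv_l, Rmult_1_r in H3 by lra.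
  assert (0 < (INR k * dl - 3) * hstep k) by (apply Rmult_lt_0_compat; lra). nra.
Qed.

Lemma floorZ_div_spec t h : 0 <= t -> 0 < h ->
  (0 <= floorZ (t / h))%Z /\ IZR (floorZ (t / h)) * h <= t < IZR (floorZ (t / h)) * h + h.
Proof.
  intros Ht Hh. unfold floorZ. destruct (base_Int_part (t / h)) as [H1 H2].
  assert (0 <= t / h) by (apply Rdiv_le_0_compat; lra).
  assert (-1 < Int_part (t / h))%Z by (apply lt_IZR; lra).
  assert (IZR (Int_part (t / h)) * h <= t / h * h) by (apply Rmult_le_compat_r; lra).
  assert (t / h * h < (IZR (Int_part (t / h)) + 1) * h) by (apply Rmult_lt_compat_r; lra).
  replace (t / h * h) with t in * by (field; lra). split; [lia | lra].
Qed.

Theorem discretization_converges (phi x : R -> R) : cont_on_m10 phi -> is_dde_sol phi x ->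
  forall t, 0 < t -> forall eps, 0 < eps ->
  exists K : nat, forall k : nat, (1 <= k)%nat -> (K <= k)%nat ->
    forall zeta : Z -> R, is_sol k 0 zeta ->
    (forall j : Z, (- Z.of_nat k <= j <= 0)%Z -> zeta j = phi (IZR j * hstep k)) ->
    Rabs (x t - zeta (floorZ (t / hstep k))) < eps.
Proof.
  intros Hphi Hx t Ht eps Heps.
  set (C := exp (4 / 3 * t)).
  assert (HC : 1 <= C) by (pose proof (exp_ineq1_le (4 / 3 * t)); unfold C; lra).
  set (e := eps / (C + 1)).
  assert (He : 0 < e) by (apply Rdiv_lt_0_compat; lra).
  assert (HCe : C * e < eps)
    by (unfold e; apply (Rmult_lt_reg_r (C + 1)); [lra|]; field_simplify; nra).
  destruct (dde_sol_unif_cont phi x Hphi Hx t e He) as (dl & Hdl & Hunif).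
  destruct (hstep_eventually_lt dl Hdl) as [K HK].
  exists K. intros k Hk1 HkK z Hs Hinit.
  destruct (hstep_spec k Hk1) as [Hh Hkh].
  pose proof (HK k Hk1 HkK) as Hsmall.
  destruct (floorZ_div_spec t (hstep k) ltac:(lra) Hh) as (HN0 & HNh).
  set (h := hstep k) in *. set (N := floorZ (t / h)) in *.
  set (n := Z.to_nat N).
  assert (Hn : INR n = IZR N) by (unfold n; rewrite INR_IZR_INZ, Z2Nat.id by lia; reflexivity).
  pose proof (discretization_error phi x Hphi Hx t e dl k Hk1 Hunif Hsmall z Hs Hinit n
    ltac:(fold h; rewrite Hn; lra) N ltac:(unfold n; lia)) as Herr. fold h in Herr.
  assert (Hpow : (1 + 4 / 3 * h) ^ n <= C).
  { apply (Rle_trans _ _ _ (pow_le_exp (4 / 3 * h) n ltac:(lra))). unfold C. rewrite Hn.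
    destruct (Req_dec (IZR N * (4 / 3 * h)) (4 / 3 * t)) as [->|Hne]; [lra|].
    left. apply exp_increasing. nra. }
  assert (0 <= IZR N * h) by (apply Rmult_le_pos; [apply IZR_le|]; lia || lra).
  pose proof (Hunif t (IZR N * h) ltac:(split; lra) ltac:(split; lra)
    ltac:(rewrite Rabs_pos_eq; lra)).
  pose proof (Rabs_triang (x t - x (IZR N * h)) (x (IZR N * h) - z N)).
  replace (x t - x (IZR N * h) + (x (IZR N * h) - z N)) with (x t - z N) in * by ring.
  nra.
Qed.

Theorem mainTheorem6 :
  (exists K : nat, forall k : nat, (1 <= k)%nat -> (K <= k)%nat ->
     unif_asympt_stable k) /\
  (forall (phi x : R -> R), cont_on_m10 phi -> is_dde_sol phi x ->
     forall t, 0 < t -> forall eps, 0 < eps ->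
       exists K : nat, forall k : nat, (1 <= k)%nat -> (K <= k)%nat ->
         forall zeta : Z -> R, is_sol k 0 zeta ->
           (forall j : Z, (- Z.of_nat k <= j <= 0)%Z ->
              zeta j = phi (IZR j * hstep k)) ->
           Rabs (x t - zeta (floorZ (t / hstep k))) < eps).
Proof.
  split.
  - exists 32%nat. intros k _ Hk.
    split; [apply unif_stable_of_ge_32 | apply unif_attractive_of_ge_32]; exact Hk.
  - exact discretization_converges.
Qed.
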